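(* Let $(X,\widetilde{\tau},\mathfrak{a}_E,E)$ be a soft aura topological space. The collection $\widetilde{\tau}_{\mathfrak{a}}=\{(G,E)\in\mathrm{SS}(X,E):\mathrm{int}_{\mathfrak{a}}(G,E)=(G,E)\}$ is a soft topology on $X$ with parameter set $E$.
   Context: Let $X$ be a nonempty set and $E$ a nonempty parameter set. A soft set over $X$ is a map $F:E\to\mathcal{P}(X)$, written $(F,E)$; $\mathrm{SS}(X,E)$ denotes all soft sets. Operations ($\sqsubseteq$, soft union $\sqcup$, soft intersection $\sqcap$) are parameterwise. A soft topology is a subfamily of $\mathrm{SS}(X,E)$ containing the null soft set $\widetilde{\Phi}$ (all values $\emptyset$) and the absolute soft set $\widetilde{X}$ (all values $X$), closed under arbitrary soft unions and finite soft intersections. A soft scope function on a soft topology $\widetilde{\tau}$ is a map $\mathfrak{a}_E:X\to\widetilde{\tau}$ with $x\in\mathfrak{a}_E(x)(e)$ for all $x\in X$, $e\in E$; $(X,\widetilde{\tau},\mathfrak{a}_E,E)$ is a soft aura topological space. Soft aura-interior: $\mathrm{int}_{\mathfrak{a}}(G,E)(e)=\{x\in X:\mathfrak{a}_E(x)(e)\subseteq G(e)\}$. *)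

Definition soft_set (X E : Type) : Type := E -> X -> Prop.

Definition soft_subset {X E : Type} (F G : soft_set X E) : Prop :=
  forall e x, F e x -> G e x.

Definition null_soft {X E : Type} : soft_set X E := fun _ _ => False.
Definition absolute_soft {X E : Type} : soft_set X E := fun _ _ => True.

Definition soft_Union {X E : Type} (S : soft_set X E -> Prop) : soft_set X E :=
  fun e x => exists F, S F /\ F e x.

Definition soft_inter {X E : Type} (F G : soft_set X E) : soft_set X E :=
  fun e x => F e x /\ G e x.

Definition soft_eq {X E : Type} (F G : soft_set X E) : Prop :=
  forall e x, F e x <-> G e x.

(* A soft topology: a family of soft sets containing the null and absolute
   soft sets, closed under arbitrary soft unions and finite (binary) soft
   intersections (binary closure is equivalent to finite closure given
   that the absolute soft set belongs to tau). *)
Definition soft_topology {X E : Type} (tau : soft_set X E -> Prop) : Prop :=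
  tau null_soft /\
  tau absolute_soft /\
  (forall S : soft_set X E -> Prop,
      (forall F, S F -> tau F) -> tau (soft_Union S)) /\
  (forall F G, tau F -> tau G -> tau (soft_inter F G)).

Definition soft_scope {X E : Type} (tau : soft_set X E -> Prop)
  (a : X -> soft_set X E) : Prop :=
  (forall x, tau (a x)) /\ (forall x e, a x e x).

Definition soft_aura_int {X E : Type} (a : X -> soft_set X E)
  (G : soft_set X E) : soft_set X E :=
  fun e x => forall y, a x e y -> G e y.

Definition tau_aura {X E : Type} (a : X -> soft_set X E) (G : soft_set X E) : Prop :=
  soft_eq (soft_aura_int a G) G.


(* Since x lies in every a x e, the aura interior is deflationary, so its
   fixed points are exactly the soft sets G with G below int_a G.  As int_a
   is monotone, this condition passes to arbitrary soft unions and to soft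
   intersections. *)

Section AuraInterior.

Context {X E : Type} {a : X -> soft_set X E}.
Hypothesis a_refl : forall x e, a x e x.

Lemma soft_aura_int_sub (G : soft_set X E) :
  soft_subset (soft_aura_int a G) G.
Proof. intros e x HG; exact (HG x (a_refl x e)). Qed.

Lemma soft_aura_int_mono {F G : soft_set X E} :
  soft_subset F G -> soft_subset (soft_aura_int a F) (soft_aura_int a G).
Proof. intros FG e x HF y Hy; exact (FG e y (HF y Hy)). Qed.

Lemma tau_auraP (G : soft_set X E) :
  tau_aura a G <-> soft_subset G (soft_aura_int a G).
Proof.
  split.
  - intros HG e x Gx; exact (proj2 (HG e x) Gx).
  - intros HG e x; split; [apply soft_aura_int_sub | apply HG].
Qed.

Lemma tau_aura_null : tau_aura a null_soft.
Proof. apply tau_auraP; intros e x []. Qed.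

Lemma tau_aura_absolute : tau_aura a absolute_soft.
Proof. apply tau_auraP; intros e x _ y _; exact I. Qed.

Lemma tau_aura_Union (S : soft_set X E -> Prop) :
  (forall F, S F -> tau_aura a F) -> tau_aura a (soft_Union S).
Proof.
  intros HS; apply tau_auraP; intros e x [F [SF Fx]].
  assert (F_sub_Union : soft_subset F (soft_Union S))
    by (intros e' x' Fx'; exists F; split; assumption).
  apply (soft_aura_int_mono F_sub_Union).
  exact (proj1 (tau_auraP F) (HS F SF) e x Fx).
Qed.

Lemma tau_aura_inter (F G : soft_set X E) :
  tau_aura a F -> tau_aura a G -> tau_aura a (soft_inter F G).
Proof.
  intros HF HG; apply tau_auraP; intros e x [Fx Gx] y Hy; split.
  - exact (proj1 (tau_auraP F) HF e x Fx y Hy).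
  - exact (proj1 (tau_auraP G) HG e x Gx y Hy).
Qed.

End AuraInterior.

Theorem theorem3p13 (X E : Type) (hX : inhabited X) (hE : inhabited E)
  (tau : soft_set X E -> Prop) (a : X -> soft_set X E) :
  soft_topology tau -> soft_scope tau a ->
  soft_topology (tau_aura a).
Proof.
  intros _ [_ a_refl].
  split; [| split; [| split]].
  - exact (tau_aura_null a_refl).
  - exact (tau_aura_absolute a_refl).
  - exact (tau_aura_Union a_refl).
  - exact (tau_aura_inter a_refl).
Qed.
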